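(* Let $G$ be a connected bipartite graph with $q$ edges and bipartition $(V_1,V_2)$. If $\chi_{la}(G)=2$, then $|V_1|\neq |V_2|$ and $\binom{q+1}{2}$ is divisible by both $|V_1|$ and $|V_2|$.
   Context: For a connected graph $G=(V,E)$ with $q=|E|$, a local antimagic labeling is a bijection $f:E\to\{1,\dots,q\}$ such that for every pair of adjacent vertices $x,y$ we have $f^+(x)\ne f^+(y)$, where $f^+(x)=\sum f(e)$ over all edges $e$ incident to $x$. The color number $c(f)$ is the number of distinct values of $f^+$, and the local antimagic chromatic number $\chi_{la}(G)$ is the minimum of $c(f)$ over all local antimagic labelings $f$ of $G$. *)

From mathcomp Require Import all_boot all_order.
Set Implicit Arguments. Unset Strict Implicit. Unset Printing Implicit Defensive.

Definition simple_graph (T : finType) (e : rel T) : Prop :=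
  symmetric e /\ irreflexive e.

Definition connected_graph (T : finType) (e : rel T) : Prop :=
  forall x y : T, connect e x y.

Definition edges (T : finType) (e : rel T) : {set {set T}} :=
  [set [set x; y] | x in [set: T], y in [set: T] & e x y].

Definition is_bipartition (T : finType) (e : rel T) (V1 : {set T}) : Prop :=
  forall x y : T, e x y -> (x \in V1) != (y \in V1).

Definition edge_labeling (T : finType) (e : rel T) (f : {set T} -> nat) : Prop :=
  {in edges e &, injective f} /\
  (forall k : nat, (1 <= k <= #|edges e|) <-> exists2 a, a \in edges e & f a = k).

Definition fplus (T : finType) (e : rel T) (f : {set T} -> nat) (x : T) : nat :=
  \sum_(a in edges e | x \in a) f a.

Definition local_antimagic (T : finType) (e : rel T) (f : {set T} -> nat) : Prop :=
  edge_labeling e f /\ forall x y : T, e x y -> fplus e f x != fplus e f y.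

Definition color_number (T : finType) (e : rel T) (f : {set T} -> nat) : nat :=
  size (undup [seq fplus e f x | x <- enum T]).

Definition la_chromatic_eq (T : finType) (e : rel T) (k : nat) : Prop :=
  (exists f, local_antimagic e f /\ color_number e f = k) /\
  (forall f, local_antimagic e f -> k <= color_number e f).

From mathcomp Require Import all_boot all_order.
Set Implicit Arguments.
Unset Strict Implicit.
Unset Printing Implicit Defensive.

(* Let f be a local antimagic labeling with two vertex sums. A proper
   colouring of a connected bipartite graph with two colours is constant on
   each side, so f^+ takes a value c1 on V1 and a different value c2 on V2.
   Every edge has exactly one end in V1, hence summing f^+ over V1 counts
   every label once: |V1| c1 = 1 + ... + q = C(q+1, 2), and likewise
   |V2| c2 = C(q+1, 2). This gives both divisibilities, and |V1| = |V2|
   would force c1 = c2. *)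

Section TwoValues.

Variable X : eqType.

Lemma size_undup_le2_eq (l : seq X) u v w :
  size (undup l) <= 2 -> u \in l -> v \in l -> w \in l ->
  u != v -> w != v -> w = u.
Proof.
move=> le2 ul vl wl uv wv; apply/eqP; apply: contraTT le2 => wu.
rewrite -ltnNge; apply: (@uniq_leq_size _ [:: u; v; w]).
  by rewrite /= !inE negb_or uv eq_sym wu eq_sym wv.
by move=> z; rewrite !inE mem_undup => /or3P [] /eqP ->.
Qed.

Lemma size_undup_map_eq2 (T : finType) (s : T -> X) :
  size (undup [seq s x | x <- enum T]) = 2 -> exists x y, s x != s y.
Proof.
have := undup_uniq [seq s x | x <- enum T].
have mem_l u : u \in undup [seq s x | x <- enum T] -> exists x, u = s x.
  by rewrite mem_undup => /mapP [x _ ->]; exists x.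
case: (undup _) mem_l => [|u [|v []]] // mem_l; rewrite /= inE andbT => uv.
have [x ux] := mem_l u (mem_head _ _).
have [y vy] : exists y, v = s y by apply: mem_l; rewrite !inE eqxx orbT.
by exists x, y; rewrite -ux -vy.
Qed.

End TwoValues.

Lemma is_bipartitionC (T : finType) (e : rel T) (V : {set T}) :
  is_bipartition e V -> is_bipartition e (~: V).
Proof. by move=> bip x y /bip; rewrite !inE; do 2 case: (_ \in V). Qed.

Lemma two_colouring_side_constant (T : finType) (X : eqType) (e : rel T)
    (V : {set T}) (s : T -> X) :
  connected_graph e -> is_bipartition e V ->
  (forall x y, e x y -> s x != s y) ->
  size (undup [seq s x | x <- enum T]) <= 2 ->
  forall x y, (x \in V) = (y \in V) -> s x = s y.
Proof.
move=> conn bip proper two x y sameV.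
have two_eq u v w : s u != s v -> s w != s v -> s w = s u.
  have im z : s z \in [seq s x | x <- enum T] by apply: map_f; rewrite mem_enum.
  exact: size_undup_le2_eq two (im u) (im v) (im w).
pose a := [pred z | (s z == s x) == ((z \in V) == (x \in V))].
have cl_a : closed e a.
  move=> z w ezw; rewrite !inE.
  have flipV : (z \in V) = ~~ (w \in V).
    by move: (bip _ _ ezw); do 2 case: (_ \in V).
  have flipS : (s z == s x) = ~~ (s w == s x).
    have szw := proper _ _ ezw.
    have [<- | szx] := eqVneq (s z) (s x); first by rewrite eq_sym szw.
    by rewrite (two_eq x z w) ?eqxx // eq_sym.
  by rewrite flipS flipV; case: (s w == s x); case: (w \in V); case: (x \in V).
have := closed_connect cl_a (conn x y).
by rewrite !inE !eqxx -sameV eqxx eqb_id => /esym/eqP ->.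
Qed.

Lemma sum_edge_labeling (T : finType) (e : rel T) (f : {set T} -> nat) :
  edge_labeling e f -> \sum_(a in edges e) f a = 'C(#|edges e|.+1, 2).
Proof.
case=> inj onto; rewrite -big_enum /= -(big_map f xpredT id).
have labels : perm_eq [seq f a | a <- enum (edges e)] (iota 1 #|edges e|).
  apply: uniq_perm.
  - rewrite map_inj_in_uniq ?enum_uniq // => a b.
    by rewrite !mem_enum; apply: inj.
  - exact: iota_uniq.
  move=> k; rewrite mem_iota add1n ltnS; apply/mapP/idP.
    by case=> a; rewrite mem_enum => aE ->; apply/onto; exists a.
  by move/onto => [a aE <-]; exists a; rewrite ?mem_enum.
by rewrite (perm_big _ labels) -bin2_sum big_ltn //= add0n /index_iota subn1.
Qed.

Lemma card_edge_side (T : finType) (e : rel T) (V : {set T}) (a : {set T}) :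
  is_bipartition e V -> a \in edges e -> #|[pred x in V | x \in a]| = 1.
Proof.
move=> bip /imset2P [x y _]; rewrite inE => /andP [_ /bip xyV] ->.
wlog xV : x y xyV / x \in V.
  move=> side; have [|xV] := boolP (x \in V); first exact: side.
  have yV : y \in V by move: xyV; rewrite (negbTE xV); case: (y \in V).
  by rewrite setUC; apply: side; rewrite // eq_sym.
have yV : y \notin V by move: xyV; rewrite xV.
rewrite -(card1 x); apply: eq_card => z; rewrite !inE.
case: (eqVneq z x) => [->|_]; first by rewrite xV.
by case: (eqVneq z y) => [->|]; rewrite ?(negbTE yV) ?andbF.
Qed.

Lemma sum_fplus_side (T : finType) (e : rel T) (f : {set T} -> nat)
    (V : {set T}) :
  is_bipartition e V -> \sum_(x in V) fplus e f x = \sum_(a in edges e) f a.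
Proof.
move=> bip; rewrite /fplus.
under eq_bigr do rewrite big_mkcondr /=.
rewrite exchange_big /=; apply: eq_bigr => a aE.
by rewrite -big_mkcondr /= sum_nat_const (card_edge_side bip aE) mul1n.
Qed.

Lemma sum_labels_side_constant (T : finType) (e : rel T) (f : {set T} -> nat)
    (V : {set T}) x :
  edge_labeling e f -> is_bipartition e V ->
  (forall y z, (y \in V) = (z \in V) -> fplus e f y = fplus e f z) ->
  x \in V -> 'C(#|edges e|.+1, 2) = #|V| * fplus e f x.
Proof.
move=> lab bip const xV.
rewrite -(sum_edge_labeling lab) -(sum_fplus_side f bip) -sum_nat_const.
by apply: eq_bigr => z zV; apply: const; rewrite zV xV.
Qed.

Lemma side_constant_sides_neq (T : finType) (X : eqType) (V : {set T})
    (s : T -> X) :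
  (forall x y, (x \in V) = (y \in V) -> s x = s y) ->
  (exists x y, s x != s y) ->
  exists x1 x2, [/\ x1 \in V, x2 \in ~: V & s x1 != s x2].
Proof.
move=> const [x [y sxy]].
have xyV : (x \in V) != (y \in V) by apply: contraNneq sxy => /const ->.
have [xV | xV] := boolP (x \in V).
  exists x, y; rewrite inE; split=> //.
  by move: xyV; rewrite xV; case: (y \in V).
exists y, x; rewrite inE eq_sym; split=> //.
by move: xyV; rewrite (negbTE xV); case: (y \in V).
Qed.

Theorem mainTheorem1 (T : finType) (e : rel T) (V1 : {set T}) :
  simple_graph e -> connected_graph e -> is_bipartition e V1 ->
  la_chromatic_eq e 2 ->
  #|V1| != #|~: V1| /\
  #|V1| %| 'C(#|edges e|.+1, 2) /\ #|~: V1| %| 'C(#|edges e|.+1, 2).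
Proof.
move=> _ conn bip [[f [[lab antimagic] two]] _].
have bipC := is_bipartitionC bip.
have const V (bipV : is_bipartition e V) :=
  two_colouring_side_constant conn bipV antimagic (eq_leq two).
have [x1 [x2 [x1V x2V s12]]] :=
  side_constant_sides_neq (const _ bip) (size_undup_map_eq2 two).
have C1 := sum_labels_side_constant lab bip (const _ bip) x1V.
have C2 := sum_labels_side_constant lab bipC (const _ bipC) x2V.
split; last by split; [rewrite [X in _ %| X]C1 | rewrite [X in _ %| X]C2];
  apply: dvdn_mulr.
have V1_gt0 : 0 < #|V1| by apply/card_gt0P; exists x1.
by apply: contra s12 => /eqP eqV; rewrite -(eqn_pmul2l V1_gt0) -C1 eqV -C2.
Qed.
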